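(* Every universal totally positive diagonal quadratic form over $\mathcal{O}_K$ has at least $M_D/s$ variables if $s$ is even and at least $M_D/(2s)$ variables if $s$ is odd.
   Context: $D>1$ squarefree, $K=\mathbb{Q}(\sqrt D)$, $\mathcal{O}_K$ its ring of integers. A totally positive diagonal form is $a_1x_1^2+\dots+a_mx_m^2$ with $a_i\in\mathcal{O}_K$ totally positive (positive together with their conjugates); it is universal if it represents every totally positive element of $\mathcal{O}_K$ with $x_i\in\mathcal{O}_K$. $\omega_D=\sqrt D$ if $D\equiv2,3\pmod4$, $\omega_D=\frac{1+\sqrt D}2$ if $D\equiv1\pmod4$, with continued fraction $\omega_D=[u_0;\overline{u_1,\dots,u_s}]$, $s$ minimal period. $M_D=u_1+u_3+\dots+u_{s-1}$ if $s$ is even; $M_D=2u_0+u_1+\dots+u_{s-1}$ if $s$ odd and $D\equiv2,3\pmod4$; $M_D=2u_0+u_1+\dots+u_{s-1}-1$ if $s$ odd and $D\equiv1\pmod4$. *)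

From HB Require Import structures.
From mathcomp Require Import all_boot all_order all_algebra.
From mathcomp Require Import reals.
Set Implicit Arguments. Unset Strict Implicit. Unset Printing Implicit Defensive.
Import Order.TTheory GRing.Theory Num.Theory.
Local Open Scope ring_scope.

Definition squarefree (D : nat) : Prop :=
  forall p : nat, prime p -> ~~ (p * p %| D)%N.

Section QuadField.
Variable R : realType.
Variable D : nat.

(* K = Q(sqrt D) is viewed as a subfield of R via its first embedding. *)
Definition sqrtD : R := Num.sqrt (D%:R).

Definition omega : R :=
  if (D %% 4 == 1)%N then (1 + sqrtD) / 2 else sqrtD.
Definition omega' : R :=
  if (D %% 4 == 1)%N then (1 - sqrtD) / 2 else - sqrtD.

Definition in_OK (x : R) : Prop :=
  exists a b : int, x = a%:~R + b%:~R * omega.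

Definition totally_positive (x : R) : Prop :=
  exists a b : int, x = a%:~R + b%:~R * omega /\
    0 < a%:~R + b%:~R * omega /\ 0 < a%:~R + b%:~R * omega'.

(* a_1 x_1^2 + ... + a_m x_m^2 with totally positive a_i in O_K *)
Definition tp_diagonal_form (m : nat) (a : 'I_m -> R) : Prop :=
  forall i, totally_positive (a i).

Definition universal_form (m : nat) (a : 'I_m -> R) : Prop :=
  forall alpha : R, totally_positive alpha ->
    exists x : 'I_m -> R, (forall i, in_OK (x i)) /\
      alpha = \sum_(i < m) a i * x i ^+ 2.

Fixpoint cf_rem (k : nat) : R :=
  match k with
  | 0%N => omega
  | k'.+1 => (cf_rem k' - (Num.floor (cf_rem k'))%:~R)^-1
  end.

Definition cf_u (k : nat) : int := Num.floor (cf_rem k).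

Definition is_period (s : nat) : Prop :=
  (0 < s)%N /\ forall k : nat, (1 <= k)%N -> cf_u (k + s) = cf_u k.

Definition is_min_period (s : nat) : Prop :=
  is_period s /\ forall s' : nat, is_period s' -> (s <= s')%N.

Definition M_D (s : nat) : int :=
  if ~~ odd s then \sum_(0 <= j < s./2) cf_u (2 * j + 1)
  else if (D %% 4 == 1)%N then 2 * cf_u 0 + \sum_(1 <= i < s) cf_u i - 1
  else 2 * cf_u 0 + \sum_(1 <= i < s) cf_u i.

End QuadField.

From HB Require Import structures.
From mathcomp Require Import all_boot all_order all_algebra.
From mathcomp Require Import reals.
From mathcomp Require Import zify ring lra.
Set Implicit Arguments. Unset Strict Implicit. Unset Printing Implicit Defensive.
Import Order.TTheory GRing.Theory Num.Theory.
Local Open Scope ring_scope.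

(* Write eps_k for the elements p_k - q_k omega built from the convergents of
   omega.  For odd k the semiconvergents eps_k + r eps_(k+1), 0 <= r <= u_k, are
   totally positive and have coordinate 1 along eps_k in the unimodular basis
   (eps_k, eps_(k+1)), whereas every totally positive integer has coordinate at
   least 1.  Hence each of these u_k + 1 elements is a single term a_i x^2 of a
   universal diagonal form.  If u_k + 1 > 2m, three of them share the same a_i,
   and the three x's are unit vectors, pairwise distinct up to sign, of the
   positive definite integral binary form (x, y) |-> (coordinate of a_i x y);
   such unit vectors are pairwise orthogonal, which is impossible in rank 2.
   So u_k < 2m for every odd k, which bounds M_D at once when s is even.  When s
   is odd, every u_k with k >= 1 has odd index up to a shift by the period; and
   since the complete quotient u_s - u_0 + omega has a purely periodic expansion,
   its conjugate lies in (-1, 0), which gives u_s >= 2 u_0 - Tr omega and hence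
   M_D <= u_1 + ... + u_s < 2ms. *)

Lemma squarefree_mul_sqr_neq (D e c : nat) : (1 < D)%N -> squarefree D ->
  (0 < e)%N -> (D * e ^ 2 != c ^ 2)%N.
Proof.
move=> D_gt1 sqfD e_gt0; apply/eqP => E.
have p_pr := pdiv_prime D_gt1; set p := pdiv D in p_pr.
have D_gt0 : (0 < D)%N by lia.
have c_gt0 : (0 < c)%N.
  by case: c E => [|c] // /eqP; rewrite muln_eq0 !expn_eq0 /=; lia.
have logD : logn p D = 1%N.
  apply/eqP; rewrite eqn_leq -(pfactor_dvdn 1 p_pr D_gt0) expn1 pdiv_dvd andbT.
  rewrite leqNgt -(pfactor_dvdn 2 p_pr D_gt0) expnS expn1.
  exact: sqfD.
have := congr1 (logn p) E.
rewrite lognM ?expn_gt0 ?e_gt0 // !lognX logD; lia.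
Qed.

Lemma fiber_card_gt2 (T T' : finType) (f : T -> T') : (2 * #|T'| < #|T|)%N ->
  exists x y z, [/\ x != y, y != z, z != x, f y = f x & f z = f x].
Proof.
move=> card_lt.
have [t' fib_gt2 | small] := pickP (fun t' => 2 < #|[pred x | f x == t']|)%N.
  case/card_gt2P: fib_gt2 => x [y [z [[xt yt zt] [xy yz zx]]]].
  rewrite !inE in xt yt zt.
  by exists x, y, z; rewrite (eqP xt) (eqP yt) (eqP zt).
suff : (#|T| <= 2 * #|T'|)%N by rewrite leqNgt card_lt.
rewrite -sum1_card (partition_big f predT) //=.
apply: (@leq_trans (\sum_(t' : T') 2)%N); last by rewrite sum_nat_const mulnC.
apply: leq_sum => t' _; rewrite sum1_card.
by have := small t'; rewrite /= ltnNge => /negbFE.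
Qed.

Definition det2 (X Y : int * int) : int := X.1 * Y.2 - X.2 * Y.1.

Section BinaryForm.
Variables f g h : int.

Definition bil (X Y : int * int) : int :=
  f * X.1 * Y.1 + g * (X.1 * Y.2 + X.2 * Y.1) + h * X.2 * Y.2.

Lemma bil_sym X Y : bil X Y = bil Y X.
Proof. rewrite /bil; ring. Qed.

Lemma bil_cramer X Y Z W :
  det2 X Y * bil Z W = det2 Z Y * bil X W + det2 X Z * bil Y W.
Proof. rewrite /det2 /bil; ring. Qed.

Lemma bil_unit_orth X Y : (forall V, V != 0 -> 0 < bil V V) ->
  bil X X = 1 -> bil Y Y = 1 -> X != Y -> X != - Y -> bil X Y = 0.
Proof.
move=> bil_pos XX YY XneY XneNY.
have /bil_pos : X - Y != 0 by rewrite subr_eq0.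
have /bil_pos : X + Y != 0 by rewrite addr_eq0.
have -> : bil (X + Y) (X + Y) = bil X X + bil Y Y + 2 * bil X Y.
  by case: X Y {XneY XneNY XX YY} => [x1 x2] [y1 y2]; rewrite /bil /=; ring.
have -> : bil (X - Y) (X - Y) = bil X X + bil Y Y - 2 * bil X Y.
  by case: X Y {XneY XneNY XX YY} => [x1 x2] [y1 y2]; rewrite /bil /=; ring.
rewrite XX YY; lia.
Qed.

Lemma bil_orth_det2_eq0 X Y :
  bil X X = 1 -> bil X Y = 0 -> det2 X Y = 0 -> Y = 0.
Proof.
move=> XX XY detXY.
have cramer2 := bil_cramer X Y (1, 0) X.
have cramer1 := bil_cramer X Y (0, 1) X.
rewrite detXY XX (bil_sym Y) XY /det2 /= in cramer1 cramer2.
case: Y {XY detXY} cramer1 cramer2 => y1 y2 /=.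
rewrite !(mul0r, mulr0, mul1r, mulr1, addr0, sub0r) => /eqP.
by rewrite eq_sym oppr_eq0 => /eqP -> <-.
Qed.

Lemma bil_no_orthonormal_triple X Y Z :
  bil X X = 1 -> bil Y Y = 1 -> bil Z Z = 1 ->
  bil X Y = 0 -> bil X Z = 0 -> bil Y Z = 0 -> False.
Proof.
move=> XX YY ZZ XY XZ YZ.
have := bil_cramer X Y Z Z; rewrite ZZ XZ YZ !mulr0 mulr1 addr0 => detXY.
by move: YY; rewrite (bil_orth_det2_eq0 XX XY detXY) /bil /= !mulr0.
Qed.

End BinaryForm.

(* A pair (a, b) stands for a + b x in the order Z[x], where x^2 = t x + n. *)
Section QuadraticOrder.
Variables t n : int.

Definition qmul (X Y : int * int) : int * int :=
  (X.1 * Y.1 + X.2 * Y.2 * n, X.1 * Y.2 + X.2 * Y.1 + X.2 * Y.2 * t).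

Lemma qmul_sqrN A X : qmul (qmul A (- X)) (- X) = qmul (qmul A X) X.
Proof. by case: A X => [a1 a2] [x1 x2]; rewrite /qmul /=; congr pair; ring. Qed.

Lemma qmul_sqr0 A : qmul (qmul A 0) 0 = 0.
Proof. by rewrite /qmul /= !(mulr0, mul0r, addr0). Qed.

Variables (S : comPzRingType) (x : S).

Definition qemb (X : int * int) : S := X.1%:~R + X.2%:~R * x.

Lemma qemb0 : qemb 0 = 0.
Proof. by rewrite /qemb /= mul0r addr0. Qed.

Lemma qembD : {morph qemb : X Y / X + Y}.
Proof. by move=> [x1 x2] [y1 y2]; rewrite /qemb /= !intrD; ring. Qed.

Lemma qembB : {morph qemb : X Y / X - Y}.
Proof. by move=> [x1 x2] [y1 y2]; rewrite /qemb /= !intrB; ring. Qed.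

Lemma qemb_sum m (F : 'I_m -> int * int) :
  qemb (\sum_(i < m) F i) = \sum_(i < m) qemb (F i).
Proof. exact: (big_morph qemb qembD qemb0). Qed.

Hypothesis x_root : x ^+ 2 = t%:~R * x + n%:~R.

Lemma qembM X Y : qemb (qmul X Y) = qemb X * qemb Y.
Proof.
case: X Y => [x1 x2] [y1 y2]; rewrite /qemb /= !(intrD, intrM).
have -> : (x1%:~R + x2%:~R * x) * (y1%:~R + y2%:~R * x) =
  x1%:~R * y1%:~R + x2%:~R * y2%:~R * x ^+ 2 + (x1%:~R * y2%:~R + x2%:~R * y1%:~R) * x :> S
  by ring.
by rewrite x_root; ring.
Qed.

End QuadraticOrder.

Definition omega_tr (D : nat) : int := if (D %% 4 == 1)%N then 1 else 0.
Definition omega_c (D : nat) : int := if (D %% 4 == 1)%N then (D %/ 4)%:Z else D%:Z.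

Section QuadraticField.
Variables (R : realType) (D : nat).
Hypotheses (D_gt1 : (1 < D)%N) (sqfD : squarefree D).

Local Notation sD := (sqrtD R D).
Local Notation w := (omega R D).
Local Notation w' := (omega' R D).
Local Notation t := (omega_tr D).
Local Notation n := (omega_c D).
Local Notation mul := (qmul t n).
Local Notation emb := (qemb w).
Local Notation emb' := (qemb w').

Lemma sqrtD_sqr : sD ^+ 2 = D%:R.
Proof. by rewrite /sqrtD sqr_sqrtr // ler0n. Qed.

Lemma sqrtD_gt1 : 1 < sD.
Proof. rewrite /sqrtD -[X in X < _]sqrtr1 ltr_sqrt ?ltr0n ?ltr1n //; lia. Qed.

Lemma sqrtD_irrational (c e : int) : sD * e%:~R = c%:~R -> e = 0.
Proof.
move=> sDe; apply/eqP; apply: contraT => e_neq0.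
have : ((D%:Z * e ^+ 2)%:~R : R) = (c ^+ 2)%:~R.
  by rewrite intrM !rmorphXn /= -sDe exprMn sqrtD_sqr mulrC.
move/intr_inj/(congr1 absz); rewrite abszM !abszX /= => DE.
have e_gt0 : (0 < `|e|)%N by rewrite absz_gt0.
by have := squarefree_mul_sqr_neq `|c|%N D_gt1 sqfD e_gt0; rewrite DE eqxx.
Qed.

Lemma omega_sqr : w ^+ 2 = t%:~R * w + n%:~R.
Proof.
rewrite /omega /omega_tr /omega_c; case: ifP => [D_mod4 | _]; last first.
  by rewrite sqrtD_sqr mul0r add0r.
have D_eq : (D%:R : R) = 4 * (D %/ 4)%:R + 1.
  by rewrite {1}(divn_eq D 4) (eqP D_mod4) natrD natrM mulrC.
rewrite mul1r -[((D %/ 4)%:Z)%:~R]/((D %/ 4)%:R : R).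
apply/eqP; rewrite -subr_eq0; apply/eqP.
have -> : ((1 + sD) / 2) ^+ 2 - ((1 + sD) / 2 + (D %/ 4)%:R) =
   (sD ^+ 2 - (4 * (D %/ 4)%:R + 1)) / 4 :> R by field.
by rewrite sqrtD_sqr D_eq subrr mul0r.
Qed.

Lemma omega'E : w' = t%:~R - w.
Proof. by rewrite /omega /omega' /omega_tr; case: ifP => _ /=; [field | rewrite sub0r]. Qed.

Lemma omega'_sqr : w' ^+ 2 = t%:~R * w' + n%:~R.
Proof.
rewrite omega'E; apply/eqP; rewrite -subr_eq0; apply/eqP.
have -> : (t%:~R - w) ^+ 2 - (t%:~R * (t%:~R - w) + n%:~R) =
   w ^+ 2 - (t%:~R * w + n%:~R) :> R by ring.
by rewrite omega_sqr subrr.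
Qed.

Lemma omega_gt1 : 1 < w.
Proof. by have := sqrtD_gt1; rewrite /omega; case: ifP => // _; lra. Qed.

Lemma omega'_lt0 : w' < 0.
Proof. by have := sqrtD_gt1; rewrite /omega'; case: ifP => _; lra. Qed.

Lemma emb_eq0 X : emb X = 0 -> X = 0.
Proof.
case: X => a b; rewrite /qemb /= => ab0.
suff b0 : b = 0.
  by move: ab0; rewrite b0 mul0r addr0 => /eqP; rewrite intr_eq0 => /eqP ->.
move: ab0; rewrite /omega; case: ifP => _ ab0.
  apply: (@sqrtD_irrational (- (a + a + b))).
  rewrite rmorphN !rmorphD /=.
  have -> : sD * b%:~R = 2 * (a%:~R + b%:~R * ((1 + sD) / 2)) - (a%:~R + a%:~R + b%:~R)
    by field.
  by rewrite ab0 mulr0 sub0r.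
apply: (@sqrtD_irrational (- a)).
by rewrite rmorphN /= -[RHS]addr0 -ab0; ring.
Qed.

Lemma emb_inj : injective emb.
Proof.
move=> X Y /eqP; rewrite -subr_eq0 -qembB => /eqP/emb_eq0/eqP.
by rewrite subr_eq0 => /eqP.
Qed.

Lemma emb'_eq0 X : emb' X = 0 -> X = 0.
Proof.
have -> : emb' X = emb (X.1 + X.2 * t, - X.2).
  by rewrite /qemb omega'E /= intrD intrM intrN; ring.
case: X => a b /emb_eq0 [] /= + /eqP; rewrite oppr_eq0 => + /eqP b0.
by rewrite b0 mul0r addr0 => ->.
Qed.

Definition tpos (X : int * int) := 0 < emb X /\ 0 < emb' X.

Lemma totally_positiveP x : totally_positive D x <-> exists X, x = emb X /\ tpos X.
Proof.
split=> [[a [b [-> [pos pos']]]] | [[a b] [-> [pos pos']]]]; last by exists a, b.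
by exists (a, b).
Qed.

Lemma in_OKP x : in_OK D x <-> exists X, x = emb X.
Proof. by split=> [[a [b ->]] | [[a b] ->]]; [exists (a, b) | exists a, b]. Qed.

Local Notation xi := (cf_rem R D).
Local Notation u := (cf_u R D).

Lemma cf_remS k : xi k.+1 = (xi k - (u k)%:~R)^-1.
Proof. by []. Qed.

Lemma cf_rem_irrational k (a b : int) : b != 0 -> xi k * b%:~R != a%:~R.
Proof.
elim: k a b => [|k IHk] a b b_neq0; apply/eqP => xib.
  have /emb_eq0 [_ /eqP] : emb (- a, b) = 0 by rewrite /qemb /= intrN mulrC xib addNr.
  by rewrite (negbTE b_neq0).
have [frac0 | frac_neq0] := eqVneq (xi k - (u k)%:~R) 0.
  by move: (IHk (u k) 1 isT); rewrite mulr1 -subr_eq0 frac0 eqxx.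
have a_neq0 : a != 0.
  apply: contraNneq frac_neq0 => a0; move/eqP: xib.
  by rewrite a0 mulf_eq0 intr_eq0 (negbTE b_neq0) orbF cf_remS invr_eq0.
have frac_a : (xi k - (u k)%:~R) * a%:~R = b%:~R.
  by rewrite -xib cf_remS mulrA mulfV // mul1r.
move: (IHk (u k * a + b) a a_neq0); rewrite intrD intrM.
have -> : xi k * a%:~R = (xi k - (u k)%:~R) * a%:~R + (u k)%:~R * a%:~R by ring.
by rewrite frac_a addrC eqxx.
Qed.

Lemma cf_frac_bounds k : 0 < xi k - (u k)%:~R < 1.
Proof.
have u_neq : (u k)%:~R != xi k.
  by have := cf_rem_irrational k (u k) (oner_neq0 _); rewrite mulr1 eq_sym.
rewrite subr_gt0 lt_neqAle u_neq floor_le /= ltrBlDr addrC.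
by have := floorD1_gt (xi k); rewrite intrD.
Qed.

Lemma cf_rem_rec k : xi k = (u k)%:~R + (xi k.+1)^-1.
Proof. by rewrite cf_remS invrK addrC subrK. Qed.

Lemma cf_rem_gt1 k : 1 < xi k.
Proof.
case: k => [|k]; first exact: omega_gt1.
by have /andP[frac_gt0 frac_lt1] := cf_frac_bounds k; rewrite cf_remS invf_gt1.
Qed.

Lemma cf_u_ge1 k : 1 <= u k.
Proof. by rewrite floor_ge_int ltW // cf_rem_gt1. Qed.

Fixpoint cf_p (k : nat) : int :=
  match k with
  | 0%N => 0
  | 1%N => 1
  | (l.+1 as l').+1 => u l * cf_p l' + cf_p l
  end.

Fixpoint cf_q (k : nat) : int :=
  match k with
  | 0%N => 1
  | 1%N => 0
  | (l.+1 as l').+1 => u l * cf_q l' + cf_q l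
  end.

(* [cf_p k.+2 / cf_q k.+2] is the [k]-th convergent of [omega], and [conv k]
   stands for the element [cf_p k - cf_q k * omega] of O_K. *)
Definition conv (k : nat) : int * int := (cf_p k, - cf_q k).

Lemma qemb_convSS (x : R) k :
  qemb x (conv k.+2) = (u k)%:~R * qemb x (conv k.+1) + qemb x (conv k).
Proof. by rewrite /qemb /= !(intrN, intrD, intrM); ring. Qed.

Lemma emb_conv k : emb (conv k) = - xi k * emb (conv k.+1).
Proof.
elim: k => [|k IHk]; first by rewrite /qemb /= oppr0 rmorph0 rmorph1 rmorphN1; ring.
have frac_neq0 : xi k - (u k)%:~R != 0.
  by case/andP: (cf_frac_bounds k) => /gt_eqF ->.
rewrite qemb_convSS IHk cf_remS -mulrDl.
have -> : (u k)%:~R + - xi k = - (xi k - (u k)%:~R) by ring.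
by rewrite !mulNr mulrN opprK mulrA mulVf // mul1r.
Qed.

Lemma emb_convSS k : emb (conv k.+2) = ((u k)%:~R - xi k) * emb (conv k.+1).
Proof. by rewrite qemb_convSS [emb (conv k)]emb_conv mulrBl mulNr. Qed.

Lemma emb_conv_sign k : if odd k then 0 < emb (conv k) else emb (conv k) < 0.
Proof.
case: k => [|k].
  by rewrite /qemb /= rmorph0 rmorphN1 add0r mulN1r oppr_lt0 (lt_trans ltr01 omega_gt1).
elim: k => [|k IHk]; first by rewrite /qemb /= oppr0 rmorph0 rmorph1 mul0r addr0 ltr01.
have u_lt_xi : (u k)%:~R - xi k < 0.
  by rewrite subr_lt0 -subr_gt0; case/andP: (cf_frac_bounds k).
move: IHk; rewrite emb_convSS /= negbK.
by case: (odd k) => IHk; [rewrite nmulr_rgt0 | rewrite nmulr_rlt0].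
Qed.

Lemma emb_conv_neq0 k : emb (conv k) != 0.
Proof. by have := emb_conv_sign k; case: (odd k) => [/gt_eqF | /lt_eqF] ->. Qed.

Lemma emb'_conv_gt0 k : 0 < emb' (conv k).
Proof.
suff : 0 < emb' (conv k) /\ 0 < emb' (conv k.+1) by case.
elim: k => [|k [IHk IHk1]].
  rewrite /qemb /= oppr0 rmorph0 rmorph1 rmorphN1 mul0r addr0 add0r mulN1r.
  by rewrite oppr_gt0 omega'_lt0 ltr01.
split=> //; rewrite qemb_convSS ltr_pwDr // mulr_ge0 // ?ltW //.
by rewrite ltr0z (lt_le_trans _ (cf_u_ge1 k)).
Qed.

Lemma emb'_conv_lt k : emb' (conv k.+1) < emb' (conv k.+2).
Proof.
have pos := emb'_conv_gt0 k; have pos1 := emb'_conv_gt0 k.+1.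
rewrite qemb_convSS -[X in X < _]addr0 ler_ltD //.
by rewrite ler_peMl ?ler1z ?cf_u_ge1 // ltW.
Qed.

Lemma det2_conv_sqr k : det2 (conv k) (conv k.+1) ^+ 2 = 1.
Proof.
elim: k => [|k IHk]; first by rewrite /det2 /= expr2; lia.
by rewrite -IHk /det2 /=; ring.
Qed.

(* Cramer's rule in the basis [conv k, conv k.+1], whose determinant is a unit. *)
Definition conv_coord k (Z : int * int) : int :=
  det2 (conv k) (conv k.+1) * det2 Z (conv k.+1).
Definition conv_coord' k (Z : int * int) : int :=
  det2 (conv k) (conv k.+1) * det2 (conv k) Z.

Lemma qemb_conv_coord (x : R) k Z : qemb x Z =
  (conv_coord k Z)%:~R * qemb x (conv k) + (conv_coord' k Z)%:~R * qemb x (conv k.+1).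
Proof.
have det_sqr : (det2 (conv k) (conv k.+1))%:~R ^+ 2 = 1 :> R.
  by rewrite -rmorphXn det2_conv_sqr.
transitivity ((det2 (conv k) (conv k.+1))%:~R ^+ 2 * qemb x Z).
  by rewrite det_sqr mul1r.
rewrite /conv_coord /conv_coord'; move: (conv k) (conv k.+1) => X Y.
by rewrite /qemb /det2 !(intrD, intrB, intrM); ring.
Qed.

Lemma conv_coordD k : {morph conv_coord k : X Y / X + Y}.
Proof. by move=> [x1 x2] [y1 y2]; rewrite /conv_coord /det2 /=; ring. Qed.

Lemma conv_coord_sum k m (F : 'I_m -> int * int) :
  conv_coord k (\sum_(i < m) F i) = \sum_(i < m) conv_coord k (F i).
Proof.
by apply: (big_morph _ (conv_coordD k)); rewrite /conv_coord /det2 /= !mul0r subrr mulr0.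
Qed.

(* For odd k, conv k is totally positive while emb (conv k.+1) < 0 < emb' (conv k.+1). *)
Lemma conv_coord_ge1 k Z : odd k -> tpos Z -> 1 <= conv_coord k Z.
Proof.
move=> odd_k [pos pos'].
have := emb_conv_sign k; have := emb_conv_sign k.+1; rewrite /= odd_k /= => neg0 pos0.
have pos0' := emb'_conv_gt0 k; have pos1' := emb'_conv_gt0 k.+1.
move: pos pos'; rewrite !(qemb_conv_coord _ k Z).
move: (conv_coord k Z) (conv_coord' k Z) => c d pos pos'.
rewrite leNgt; apply/negP => c_lt1.
have c_le0 : (c%:~R : R) <= 0 by rewrite lerz0; lia.
have [d_le0 | d_gt0] := lerP d 0.
  have d_le0' : (d%:~R : R) <= 0 by rewrite lerz0.
  nra.
have d_ge1 : (1 : R) <= d%:~R by rewrite ler1z; lia.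
nra.
Qed.

Definition semiconv k (r : int) : int * int :=
  (cf_p k + r * cf_p k.+1, - (cf_q k + r * cf_q k.+1)).

Lemma qemb_semiconv (x : R) k r :
  qemb x (semiconv k r) = qemb x (conv k) + r%:~R * qemb x (conv k.+1).
Proof. by rewrite /qemb /= !(intrN, intrD, intrM); ring. Qed.

Lemma conv_coord_semiconv k r : conv_coord k (semiconv k r) = 1.
Proof. by rewrite -(det2_conv_sqr k) /conv_coord /det2 /=; ring. Qed.

Lemma semiconv_inj k : injective (semiconv k).
Proof.
move=> r1 r2 /(congr1 emb)/eqP; rewrite !qemb_semiconv (can_eq (addKr _)).
by rewrite (inj_eq (mulIf (emb_conv_neq0 _))) eqr_int => /eqP.
Qed.

Lemma semiconv_tpos k r : odd k -> 0 <= r <= u k -> tpos (semiconv k r).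
Proof.
move=> odd_k /andP[r_ge0 r_le].
have := emb_conv_sign k.+2; have := emb_conv_sign k.+1; rewrite /= odd_k /= => neg1 pos2.
have pos0' := emb'_conv_gt0 k; have pos1' := emb'_conv_gt0 k.+1.
have r_ge0' : (0 : R) <= r%:~R by rewrite ler0z.
have r_le' : (r%:~R : R) <= (u k)%:~R by rewrite ler_int.
move: pos2; rewrite qemb_convSS => pos2.
by split; rewrite qemb_semiconv; nra.
Qed.

Lemma emb_mul X Y : emb (mul X Y) = emb X * emb Y.
Proof. exact: qembM omega_sqr X Y. Qed.

Lemma emb'_mul X Y : emb' (mul X Y) = emb' X * emb' Y.
Proof. exact: qembM omega'_sqr X Y. Qed.

Lemma tpos_mul_sqr A X : tpos A -> X != 0 -> tpos (mul (mul A X) X).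
Proof.
move=> [pos pos'] X_neq0.
have embX : emb X != 0 by apply: contra X_neq0 => /eqP/emb_eq0 ->.
have embX' : emb' X != 0 by apply: contra X_neq0 => /eqP/emb'_eq0 ->.
rewrite /tpos !emb_mul !emb'_mul -!mulrA -!expr2.
by split; apply: mulr_gt0; rewrite // exprn_even_gt0.
Qed.

Lemma sum_mul_sqr_single k m (A X : 'I_m -> int * int) Z :
  odd k -> (forall i, tpos (A i)) -> conv_coord k Z = 1 ->
  Z = \sum_(i < m) mul (mul (A i) (X i)) (X i) ->
  exists i, Z = mul (mul (A i) (X i)) (X i).
Proof.
move=> odd_k Apos coordZ Z_eq.
pose T i := mul (mul (A i) (X i)) (X i).
have T_ge1 i : X i != 0 -> 1 <= conv_coord k (T i).
  by move=> Xi_neq0; exact: conv_coord_ge1 odd_k (tpos_mul_sqr (Apos i) Xi_neq0).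
have T0 i : X i = 0 -> T i = 0 by rewrite /T => ->; exact: qmul_sqr0.
have coord0 : conv_coord k 0 = 0 by rewrite /conv_coord /det2 /= !mul0r subrr mulr0.
have T_ge0 i : 0 <= conv_coord k (T i).
  by have [/T0 -> | /T_ge1 /(le_trans ler01)] := eqVneq (X i) 0; rewrite ?coord0.
have sum1 : \sum_(i < m) conv_coord k (T i) = 1 by rewrite -conv_coord_sum -Z_eq.
have [i Xi_neq0 | X0] := pickP (fun i => X i != 0); last first.
  move: sum1; rewrite big1 // => i _.
  by rewrite T0 ?coord0 //; apply/eqP; have := X0 i; rewrite /= => /negbFE.
exists i; rewrite Z_eq (bigD1 i) //= big1 ?addr0 // => l l_neq_i.
apply: T0; apply/eqP; apply: contraT => Xl_neq0.
move: sum1; rewrite (bigD1 i) // (bigD1 l) //=; set rest := bigop _ _ _.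
have : 0 <= rest by exact: sumr_ge0.
have := T_ge1 i Xi_neq0; have := T_ge1 l Xl_neq0.
lia.
Qed.

Definition conv_form k A X Y := conv_coord k (mul (mul A X) Y).

Lemma conv_form_bil k A X Y : conv_form k A X Y =
  bil (conv_form k A (1, 0) (1, 0)) (conv_form k A (1, 0) (0, 1))
      (conv_form k A (0, 1) (0, 1)) X Y.
Proof.
rewrite /conv_form /conv_coord /bil /det2 /qmul; move: (conv k) (conv k.+1) => U V.
by case: A X Y => [a1 a2] [x1 x2] [y1 y2] /=; ring.
Qed.

Lemma semiconv_three_squares k A X Y Z r1 r2 r3 : odd k -> tpos A ->
  mul (mul A X) X = semiconv k r1 -> mul (mul A Y) Y = semiconv k r2 ->
  mul (mul A Z) Z = semiconv k r3 -> r1 != r2 -> r1 != r3 -> r2 != r3 -> False.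
Proof.
move=> odd_k Apos.
pose B := bil (conv_form k A (1, 0) (1, 0)) (conv_form k A (1, 0) (0, 1))
              (conv_form k A (0, 1) (0, 1)).
have B_pos V : V != 0 -> 0 < B V V.
  move=> V_neq0; rewrite /B -conv_form_bil.
  exact: lt_le_trans ltr01 (conv_coord_ge1 odd_k (tpos_mul_sqr Apos V_neq0)).
have B_unit V r : mul (mul A V) V = semiconv k r -> B V V = 1.
  by rewrite /B -conv_form_bil /conv_form => ->; exact: conv_coord_semiconv.
have B_orth U V rU rV : mul (mul A U) U = semiconv k rU ->
    mul (mul A V) V = semiconv k rV -> rU != rV -> B U V = 0.
  move=> AUU AVV rUV; apply: bil_unit_orth.
  - exact: B_pos.
  - exact: B_unit AUU.
  - exact: B_unit AVV.
  - by apply: contraNneq rUV => UV; apply/eqP/(@semiconv_inj k); rewrite -AUU -AVV UV.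
  - apply: contraNneq rUV => UV; apply/eqP/(@semiconv_inj k).
    by rewrite -AUU -AVV UV qmul_sqrN.
move=> AXX AYY AZZ r12 r13 r23.
exact: bil_no_orthonormal_triple (B_unit _ _ AXX) (B_unit _ _ AYY) (B_unit _ _ AZZ)
  (B_orth _ _ _ _ AXX AYY r12) (B_orth _ _ _ _ AXX AZZ r13) (B_orth _ _ _ _ AYY AZZ r23).
Qed.

Lemma cf_u_odd_lt m (A : 'I_m -> int * int) k : odd k -> (forall i, tpos (A i)) ->
  (forall Z, tpos Z -> exists X : 'I_m -> int * int,
     Z = \sum_(i < m) mul (mul (A i) (X i)) (X i)) ->
  u k < 2 * m%:Z.
Proof.
move=> odd_k Apos univ; rewrite ltNge; apply/negP => u_ge.
have u_ge1 := cf_u_ge1 k.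
have single (r : 'I_`|u k|.+1) :
    exists iX : 'I_m * (int * int), semiconv k r = mul (mul (A iX.1) iX.2) iX.2.
  have r_le : 0 <= r%:Z <= u k by have := ltn_ord r; lia.
  have [X Z_eq] := univ _ (semiconv_tpos odd_k r_le).
  have [i ->] := sum_mul_sqr_single odd_k Apos (conv_coord_semiconv k r) Z_eq.
  by exists (i, X i).
have [F FP] := fin_all_exists single.
have card_lt : (2 * #|'I_m| < #|'I_`|u k|.+1|)%N by rewrite !card_ord; lia.
have [r1 [r2 [r3 [r12 r23 r31 F2 F3]]]] := fiber_card_gt2 (fun r => (F r).1) card_lt.
have ord_neq (r r' : 'I_`|u k|.+1) : r != r' -> r%:Z != r'%:Z by rewrite eqz_nat.
move: (FP r2) (FP r3); rewrite /= F2 F3 => FP2 FP3.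
apply: (semiconv_three_squares odd_k (Apos (F r1).1) (esym (FP r1)) (esym FP2) (esym FP3)).
- exact: ord_neq.
- by apply: ord_neq; rewrite eq_sym.
- exact: ord_neq.
Qed.

Lemma universal_form_coords m (a : 'I_m -> R) :
  tp_diagonal_form D a -> universal_form D a ->
  exists A : 'I_m -> int * int, (forall i, tpos (A i)) /\
    forall Z, tpos Z -> exists X : 'I_m -> int * int,
      Z = \sum_(i < m) mul (mul (A i) (X i)) (X i).
Proof.
move=> diag univ.
have [A aA] := fin_all_exists (fun i => (totally_positiveP (a i)).1 (diag i)).
exists A; split=> [i | Z Zpos]; first by case: (aA i).
have /univ [x [xOK sum_eq]] : totally_positive D (emb Z) by apply/totally_positiveP; exists Z.
have [X xX] := fin_all_exists (fun i => (in_OKP (x i)).1 (xOK i)).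
exists X; apply: emb_inj; rewrite qemb_sum sum_eq; apply: eq_bigr => i _.
by rewrite !emb_mul -(aA i).1 -xX expr2 mulrA.
Qed.

Lemma cf_rem_mulSS_ge2 k : 2 <= xi k.+1 * xi k.+2.
Proof.
have xi_gt1 := cf_rem_gt1 k.+2.
have -> : xi k.+1 * xi k.+2 = (u k.+1)%:~R * xi k.+2 + 1.
  by rewrite cf_rem_rec mulrDl mulVf // gt_eqF // (lt_trans ltr01 xi_gt1).
have : (1 : R) <= (u k.+1)%:~R by rewrite ler1z cf_u_ge1.
nra.
Qed.

Section Period.
Variable s : nat.
Hypothesis s_period : is_period R D s.

Local Notation gap k := (`|xi (k + s) - xi k|).

Lemma cf_rem_gap_lt1 k : (1 <= k)%N -> gap k < 1.
Proof.
move=> k_ge1; have := s_period.2 k k_ge1; rewrite /cf_u => u_eq.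
have := floor_le (xi k); have := floorD1_gt (xi k).
have := floor_le (xi (k + s)); have := floorD1_gt (xi (k + s)).
rewrite u_eq !intrD ltr_norml => ? ? ? ?; apply/andP; split; lra.
Qed.

Lemma cf_rem_gapS k : (1 <= k)%N -> gap k.+1 = gap k * (xi k.+1 * xi (k.+1 + s)).
Proof.
move=> k_ge1.
have frac_gt0 l : 0 < xi l - (u l)%:~R by case/andP: (cf_frac_bounds l).
have frac_s_gt0 := frac_gt0 (k + s); rewrite s_period.2 // in frac_s_gt0.
rewrite addSn !cf_remS s_period.2 //.
have -> : (xi (k + s) - (u k)%:~R)^-1 - (xi k - (u k)%:~R)^-1 =
    - (xi (k + s) - xi k) * ((xi k - (u k)%:~R)^-1 * (xi (k + s) - (u k)%:~R)^-1).
  by field; rewrite !gt_eqF.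
by rewrite normrM normrN ger0_norm // mulr_ge0 // ltW // invr_gt0.
Qed.

Lemma cf_rem_gapSS k : (1 <= k)%N -> 2 * gap k <= gap k.+2.
Proof.
move=> k_ge1; rewrite (cf_rem_gapS (leqW k_ge1)) (cf_rem_gapS k_ge1) !addSn.
have y_ge1 : 1 <= xi (k + s).+1 * xi (k + s).+2.
  by rewrite mulr_ege1 // ltW // cf_rem_gt1.
have := cf_rem_mulSS_ge2 k; have := normr_ge0 (xi (k + s) - xi k).
move: (gap k) (xi k.+1) (xi k.+2) (xi (k + s).+1) (xi (k + s).+2) y_ge1.
move=> g x1 x2 y1 y2 y_ge1 g_ge0 x_ge2.
have h1 : 2 * g <= g * (x1 * x2) by rewrite mulrC ler_wpM2l.
have -> : g * (x1 * y1) * (x2 * y2) = g * (x1 * x2) * (y1 * y2) by ring.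
by rewrite (le_trans h1) // ler_peMr // (le_trans _ h1) // mulr_ge0.
Qed.

Lemma cf_rem_gap_exp l : 2 ^+ l * gap 1 <= gap (2 * l).+1.
Proof.
elim: l => [|l IHl]; first by rewrite expr0 mul1r.
rewrite exprS -mulrA mulnS.
exact: le_trans (ler_wpM2l _ IHl) (cf_rem_gapSS _).
Qed.

(* The gap doubles every two steps but stays below 1. *)
Lemma cf_rem_period : xi s.+1 = xi 1.
Proof.
apply/eqP; rewrite -subr_eq0 -normr_eq0 -[s.+1]/(1 + s)%N; apply: contraT => gap_neq0.
have gap_gt0 : 0 < gap 1 by rewrite lt_def gap_neq0 normr_ge0.
set l := Num.bound (gap 1)^-1.
have := cf_rem_gap_lt1 (k := (2 * l).+1) isT; have := cf_rem_gap_exp l.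
have : (gap 1)^-1 < 2%:R ^+ l := upper_nthrootP (leqnn l).
rewrite -(ltr_pM2r gap_gt0) mulVf ?gt_eqF //.
by move=> lt1 le2 /(lt_trans (lt_le_trans lt1 le2)); rewrite ltxx.
Qed.

(* Conjugating emb (conv s) = - xi s * emb (conv s.+1), with xi s = u s - u 0 + w,
   puts the conjugate u s - u 0 + w' of xi s in (-1, 0). *)
Lemma cf_u_period_ge : 2 * u 0 - t <= u s.
Proof.
have s_gt0 : (0 < s)%N by case: s_period.
set c := u s - u 0.
have xi_s : xi s = c%:~R + w.
  by rewrite cf_rem_rec cf_rem_period cf_remS invrK /c intrB /=; ring.
have /emb_eq0/(congr1 emb') : emb (conv s + mul (c, 1) (conv s.+1)) = 0.
  by rewrite qembD emb_mul emb_conv xi_s /qemb /=; ring.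
have emb'_c : emb' (c, 1) = c%:~R + w' by rewrite /qemb /= mul1r.
rewrite qemb0 qembD emb'_mul emb'_c => conj_eq.
have pos := emb'_conv_gt0 s.
have lt := emb'_conv_lt s.-1; rewrite prednK // in lt.
have gt_m1 : -1 < c%:~R + w' by have := lt_trans pos lt; nra.
have u0_le : (u 0)%:~R <= w := floor_le w.
rewrite omega'E /c intrB in gt_m1.
have : ((u 0 - 1 - t)%:~R : R) < (u s - u 0)%:~R by rewrite !intrB; lra.
rewrite ltr_int; lia.
Qed.

End Period.

End QuadraticField.

Section DenominatorBound.
Variables (R : realType) (D m : nat).
Local Notation u := (cf_u R D).
Hypothesis cf_u_odd_lt2m : forall k, odd k -> u k < 2 * m%:Z.

Lemma M_D_even_le s : ~~ odd s -> M_D R D s <= s%:Z * m%:Z.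
Proof.
move=> even_s; rewrite /M_D even_s.
have -> : s%:Z = (s./2 * 2)%N%:Z by rewrite -{1}(odd_double_half s) (negbTE even_s) -muln2.
apply: (@le_trans _ _ (\sum_(0 <= j < s./2) (2 * m%:Z - 1))).
  apply: ler_sum => j _; have : odd (2 * j + 1) by rewrite addn1 /= mul2n odd_double.
  by move/cf_u_odd_lt2m; lia.
rewrite sumr_const_nat subn0 pmulrn mulrzz; lia.
Qed.

Lemma M_D_odd_le s : is_period R D s -> odd s -> 2 * u 0 - omega_tr D <= u s ->
  M_D R D s <= 2 * s%:Z * m%:Z.
Proof.
move=> s_period odd_s us_ge.
have s_gt0 : (0 < s)%N by case: s_period.
have u_lt k : (1 <= k)%N -> u k < 2 * m%:Z.
  move=> k_ge1; case odd_k: (odd k); first exact: cf_u_odd_lt2m.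
  by rewrite -(s_period.2 k k_ge1); apply: cf_u_odd_lt2m; rewrite oddD odd_k odd_s.
have M_le : M_D R D s <= \sum_(1 <= i < s.+1) u i.
  rewrite big_nat_recr //= /M_D odd_s /=.
  move: us_ge; rewrite /omega_tr.
  case: ifP => _ us_ge; rewrite [_ + u s]addrC.
    by rewrite addrAC lerD2r.
  by rewrite lerD2r; rewrite subr0 in us_ge.
apply: (le_trans M_le); apply: (@le_trans _ _ (\sum_(1 <= i < s.+1) (2 * m%:Z - 1))).
  by apply: ler_sum_nat => i /andP[i_ge1 _]; have := u_lt i i_ge1; lia.
rewrite sumr_const_nat subSS subn0 pmulrn mulrzz; lia.
Qed.

End DenominatorBound.

Theorem theorem12 (R : realType) (D : nat) (s : nat) (m : nat) (a : 'I_m -> R) :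
  (1 < D)%N -> squarefree D ->
  @is_min_period R D s ->
  @tp_diagonal_form R D m a -> @universal_form R D m a ->
  (if ~~ odd s then (@M_D R D s)%:~R / s%:R <= (m%:R : R)
   else (@M_D R D s)%:~R / (2 * s%:R) <= (m%:R : R)).
Proof.
move=> D_gt1 sqfD [s_period _] diag univ.
have [A [Apos univA]] := universal_form_coords D_gt1 sqfD diag univ.
have u_lt k (odd_k : odd k) := cf_u_odd_lt D_gt1 sqfD odd_k Apos univA.
have s_gt0 : (0 < s%:R :> R) by rewrite ltr0n; case: s_period.
case: ifP => [even_s | /negbFE odd_s]; rewrite ler_pdivrMr ?mulr_gt0 //.
  have := M_D_even_le u_lt even_s.
  by rewrite -(ler_int R) intrM mulrC -!pmulrn.
have := M_D_odd_le u_lt s_period odd_s (cf_u_period_ge D_gt1 sqfD s_period).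
by rewrite -(ler_int R) !intrM -!pmulrn mulrC.
Qed.
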